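(* Let $d=p$ be any prime with $p\equiv 3\pmod 4$, let $x_0=-2-\sqrt{d+1}$ (with $\sqrt{d+1}>0$), and let $\sqrt{x_0}$ be a purely imaginary square root of $x_0$. Then there exists $x_1\in\mathbb{C}$ with $|x_1|=1$ such that the vector $|\mathbf v\rangle\in\mathbb{C}^d$ with components $v_0=\sqrt{x_0}$, $v_j=x_1$ for $j$ a nonzero quadratic residue mod $d$, and $v_j=-1/x_1$ for $j$ a quadratic nonresidue mod $d$, satisfies $$\langle\mathbf v|X^{-2j}|\mathbf v\rangle=(\sqrt{d+1}+1)\,v_j^2\qquad\text{for all } j\not\equiv 0\pmod d,$$ where $X$ is the cyclic shift $X|r\rangle=|r+1\rangle$, so that $\langle\mathbf v|X^{-2j}|\mathbf v\rangle=\sum_{k=0}^{d-1}v_k^*v_{k+2j}$.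
   Context: Indices are taken modulo $d$ and $^*$ denotes complex conjugation. Such a vector is called a Legendre vector; the displayed identity is called the $X$-overlap equation. *)

From HB Require Import structures.
From mathcomp Require Import all_boot all_order all_algebra.
From mathcomp Require Import reals.
From mathcomp Require Import complex.
Set Implicit Arguments. Unset Strict Implicit. Unset Printing Implicit Defensive.
Import Order.TTheory GRing.Theory Num.Theory.
Local Open Scope ring_scope.

Definition qres (p j : nat) : bool :=
  (j %% p != 0)%N && [exists x : 'I_p, (x * x == j %[mod p])%N].

Definition addmod (p : nat) (k : 'I_p) (m : nat) : 'I_p :=
  @Ordinal p ((k + m) %% p)%N (ltn_pmod _ (leq_ltn_trans (leq0n k) (ltn_ord k))).

Definition overlap (C : numClosedFieldType) (p : nat) (v : 'I_p -> C) (j : nat) : C :=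
  \sum_(k < p) (v k)^* * v (addmod k (2 * j)).

(* Write x1 = c + i e and s = i t with c, e, t real and c^2 + e^2 = 1.  Then
   v = i e + c chi + i (t - e) delta_0, where chi is the Legendre symbol
   (chi(x) = x^((p-1)/2) by Euler's criterion), so the X-overlaps of v only
   involve sum chi = 0 and the Jacobsthal sum sum_x chi(x) chi(x + m) = -1.
   As chi(-1) = -1 for p = 3 mod 4, the X-overlap equation, with
   r = sqrt(p + 1), reduces to the linear condition chi(2) (e - t) = (r + 1) e
   on the imaginary part; squaring it and using t^2 = r + 2 gives the real part.
   Its solution e = - chi(2) t / (r + 1 - chi(2)) has e^2 <= 1 because r >= 2,
   so c = sqrt(1 - e^2) is real. *)

From HB Require Import structures.
From mathcomp Require Import all_boot all_order all_algebra all_field.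
From mathcomp Require Import reals complex.
From mathcomp Require Import ring zify.
Set Implicit Arguments. Unset Strict Implicit. Unset Printing Implicit Defensive.
Import Order.TTheory GRing.Theory Num.Theory.
Local Open Scope ring_scope.

Section LegendreSymbol.

Variable p : nat.
Hypothesis p_pr : prime p.
Hypothesis p_odd : odd p.

Let half_gt0 : (0 < p./2)%N.
Proof. by have := odd_prime_gt2 p_odd p_pr; rewrite -divn2; lia. Qed.

Let double_half : (p./2 * 2)%N = p.-1.
Proof. by have := odd_double_half p; rewrite p_odd -muln2; lia. Qed.

Lemma Fp_natr_eq0 (k : nat) : ((k%:R : 'F_p) == 0) = (p %| k)%N.
Proof. by rewrite (dvdn_pcharf (pchar_Fp p_pr)). Qed.

Lemma Fp_natr_neq0 (k : nat) : (0 < k < p)%N -> (k%:R : 'F_p) != 0.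
Proof. by case/andP=> k0 kp; rewrite Fp_natr_eq0 gtnNdvd. Qed.

Lemma Fp_natr_eqmod (a b : nat) : ((a%:R : 'F_p) == b%:R) = (a == b %[mod p]).
Proof.
apply/eqP/eqP => [ab | ab]; first by rewrite -!(val_Fp_nat p_pr) ab.
by rewrite -(Fp_nat_mod p_pr a) ab Fp_nat_mod.
Qed.

Lemma Fp_expf_pred (x : 'F_p) : x != 0 -> x ^+ p.-1 = 1.
Proof.
move=> x0; apply: (mulfI x0); rewrite mulr1 -exprS prednK ?prime_gt0 //.
by have := expf_card x; rewrite card_Fp.
Qed.

Lemma expf_half_sqr (x : 'F_p) : x != 0 -> (x ^+ p./2) ^+ 2 = 1.
Proof. by move=> x0; rewrite -exprM double_half Fp_expf_pred. Qed.

Lemma expf_half_pm1 (x : 'F_p) : x != 0 -> x ^+ p./2 = 1 \/ x ^+ p./2 = -1.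
Proof.
by move/expf_half_sqr/eqP; rewrite sqrf_eq1 => /orP[] /eqP; [left | right].
Qed.

Lemma Fp_oppr1_neq1 : (-1 : 'F_p) != 1.
Proof.
rewrite eq_sym -subr_eq0 opprK -(natrD _ 1 1) Fp_natr_neq0 //.
by rewrite odd_prime_gt2.
Qed.

Lemma expf_half_eq1P (x : 'F_p) : x != 0 ->
  reflect (exists y, y ^+ 2 = x) (x ^+ p./2 == 1).
Proof.
move=> x0; apply: (iffP eqP) => [xh1|[y y2x]]; last first.
  have y0 : y != 0 by apply: contraNneq x0 => y0; rewrite -y2x y0 expr0n.
  by rewrite -y2x exprAC expf_half_sqr.
(* The squares of 1, ..., p./2 are p./2 distinct roots of X^(p./2) - 1, hence all of them. *)
pose sqrs : seq 'F_p := [seq i.+1%:R ^+ 2 | i <- iota 0 p./2].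
have lt_p i : (i < p./2)%N -> (i.+1 < p)%N by have := double_half; lia.
have sqrs_roots : all p./2.-unity_root sqrs.
  rewrite all_map; apply/allP => i; rewrite mem_iota add0n => ip /=.
  by rewrite unity_rootE exprAC expf_half_sqr // Fp_natr_neq0 ?lt_p.
have sqrs_uniq : uniq sqrs.
  rewrite map_inj_in_uniq ?iota_uniq // => i k; rewrite !mem_iota !add0n.
  move=> ip kp /eqP; rewrite eqf_sqr -addr_eq0 -natrD.
  rewrite Fp_natr_eqmod !modn_small ?lt_p // (negPf (Fp_natr_neq0 _)) ?orbF => [/eqP[] //|].
  by have := lt_p i ip; have := lt_p k kp; lia.
have [x_sqr|x_new] := boolP (x \in sqrs); first by case/mapP: x_sqr => i _ ->; exists i.+1%:R.
have : (size (x :: sqrs) <= p./2)%N.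
  by apply: max_unity_roots => //=; rewrite ?unity_rootE ?xh1 ?eqxx ?sqrs_roots ?x_new.
by rewrite /= size_map size_iota ltnn.
Qed.

Lemma exists_expf_half_eqN1 : exists x : 'F_p, x ^+ p./2 = -1.
Proof.
(* X^(p./2) - 1 has fewer than p - 1 roots. *)
pose nz := enum [set~ (0 : 'F_p)].
have size_nz : size nz = p.-1 by rewrite -cardE cardsC1 card_Fp.
have : ~~ all p./2.-unity_root nz.
  apply/negP => /(max_unity_roots half_gt0)/(_ (enum_uniq _)).
  by rewrite size_nz -double_half; lia.
case/allPn => x; rewrite mem_enum !inE unity_rootE => x0 xh_neq1; exists x.
by case: (expf_half_pm1 x0) xh_neq1 => ->; rewrite ?eqxx.
Qed.

Definition legendre (x : 'F_p) : int :=
  if x == 0 then 0 else if x ^+ p./2 == 1 then 1 else -1.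

Lemma legendre0 : legendre 0 = 0.
Proof. by rewrite /legendre eqxx. Qed.

Lemma legendre1 : legendre 1 = 1.
Proof. by rewrite /legendre oner_eq0 expr1n eqxx. Qed.

Lemma legendre_eq1 (x : 'F_p) : (legendre x == 1) = (x != 0) && (x ^+ p./2 == 1).
Proof. by rewrite /legendre; have [|_] //= := eqVneq x 0; case: (x ^+ _ == 1). Qed.

Lemma legendre_pm1 (x : 'F_p) : x != 0 -> legendre x = 1 \/ legendre x = -1.
Proof. by rewrite /legendre => /negPf->; case: ifP; [left | right]. Qed.

Lemma legendre_sqr (x : 'F_p) : x != 0 -> legendre x ^+ 2 = 1.
Proof. by case/legendre_pm1=> ->. Qed.

Lemma legendreM (x y : 'F_p) : legendre (x * y) = legendre x * legendre y.
Proof.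
rewrite /legendre mulf_eq0.
have [_ | x0] /= := eqVneq x 0; first by rewrite mul0r.
have [_ | y0] := eqVneq y 0; first by rewrite mulr0.
rewrite exprMn; case: (expf_half_pm1 x0) => ->; case: (expf_half_pm1 y0) => ->;
  by rewrite ?mul1r ?mulr1 ?mulrNN ?mulr1 ?eqxx ?(negPf Fp_oppr1_neq1).
Qed.

Lemma legendreN1 : legendre (-1) = (-1) ^+ p./2.
Proof.
rewrite /legendre oppr_eq0 oner_eq0 -!(signr_odd _ p./2).
by case: (odd _); rewrite ?eqxx // (negPf Fp_oppr1_neq1).
Qed.

Lemma qres_legendre (k : nat) : qres p k = (legendre k%:R == 1).
Proof.
rewrite /qres legendre_eq1.
have -> : (k %% p != 0)%N = ((k%:R : 'F_p) != 0) by rewrite Fp_natr_eq0.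
have [//|k0 /=] := eqVneq (k%:R : 'F_p) 0.
apply/existsP/(expf_half_eq1P k0) => [[x /eqP xx_k] | [y y2k]].
  by exists x%:R; apply/eqP; rewrite -natrX Fp_natr_eqmod -xx_k mulnn.
have y_lt_p : (val y < p)%N by rewrite -[X in (_ < X)%N](Fp_cast p_pr) ltn_ord.
by exists (Ordinal y_lt_p); rewrite /= -Fp_natr_eqmod natrM natr_Zp -expr2 y2k.
Qed.

Lemma sum_legendre : \sum_x legendre x = 0.
Proof.
have [a a_half] := exists_expf_half_eqN1.
have : a ^+ p./2 != 0 by rewrite a_half oppr_eq0 oner_eq0.
rewrite expf_eq0 half_gt0 /= => a0.
have la : legendre a = -1 by rewrite /legendre (negPf a0) a_half (negPf Fp_oppr1_neq1).
set S := \sum_x _; have : S = - S.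
  rewrite {1}/S (reindex_inj (mulfI a0)) /=.
  by under eq_bigr do rewrite legendreM; rewrite -mulr_sumr la mulN1r.
lia.
Qed.

Lemma sum_legendre_shift (m : 'F_p) : m != 0 ->
  \sum_x legendre x * legendre (x + m) = -1.
Proof.
(* Since 0^-1 = 0, x |-> 1 + m / x is a permutation of 'F_p sending 0 to 1. *)
move=> m0.
have inv_inj : injective (fun x : 'F_p => 1 + m * x^-1).
  by move=> a b /addrI /(mulfI m0) /invr_inj.
have shiftE x : legendre x * legendre (x + m) = legendre (1 + m * x^-1) - (x == 0)%:R.
  have [-> | x0] := eqVneq x 0.
    by rewrite legendre0 mul0r invr0 mulr0 addr0 legendre1 subrr.
  have -> : x + m = x * (1 + m * x^-1) by rewrite mulrDr mulr1 mulrCA mulfV ?mulr1.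
  by rewrite legendreM mulrA -expr2 legendre_sqr // mul1r subr0.
under eq_bigr do rewrite shiftE.
rewrite sumrB; have -> : \sum_x legendre (1 + m / x) = \sum_x legendre x.
  by rewrite [RHS](reindex_inj inv_inj).
rewrite sum_legendre sub0r.
by rewrite (bigD1 0) //= big1 ?addr0 // => x /negPf->.
Qed.

Lemma legendreN1_mod4 : (p %% 4 = 3)%N -> legendre (-1) = -1.
Proof.
move=> p_mod4; rewrite legendreN1 -signr_odd.
suff -> : odd p./2 by [].
have : (p./2 %% 2 = 1)%N by rewrite -divn2; lia.
by rewrite modn2; case: odd.
Qed.

End LegendreSymbol.

Lemma sumr_delta (R : pzSemiRingType) (I : finType) (y : I) (F : I -> R) :
  \sum_x (x == y)%:R * F x = F y.
Proof. by rewrite (bigD1 y) //= eqxx mul1r big1 ?addr0 // => x /negPf->; rewrite mul0r. Qed.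

Section LegendreVector.

Variables (C : numClosedFieldType) (p : nat).
Hypothesis p_pr : prime p.
Hypothesis p_odd : odd p.

Local Notation chi x := ((legendre (x : 'F_p))%:~R : C).

Definition legendre_vec (a b d : C) (x : 'F_p) : C := a + b * chi x + (x == 0)%:R * d.

Lemma sum_chi : \sum_(x : 'F_p) chi x = 0.
Proof. by rewrite -rmorph_sum sum_legendre. Qed.

Lemma sum_chi_shift (m : 'F_p) : m != 0 -> \sum_(x : 'F_p) chi x * chi (x + m) = -1.
Proof.
by move=> m0; under eq_bigr do rewrite -intrM; rewrite -rmorph_sum sum_legendre_shift.
Qed.

Lemma sum_conj_affine_legendre_shift (a b : C) (m : 'F_p) : m != 0 ->
  \sum_x (a + b * chi x)^* * (a + b * chi (x + m)) = p%:R * (a^* * a) - b^* * b.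
Proof.
move=> m0.
under eq_bigr => x _ do rewrite rmorphD rmorphM rmorph_int /=.
have expand x : (a^* + b^* * chi x) * (a + b * chi (x + m)) =
    a^* * a + a^* * b * chi (x + m) + b^* * a * chi x + b^* * b * (chi x * chi (x + m)).
  by ring.
under eq_bigr do rewrite expand.
have sum_chi_m : \sum_x chi (x + m) = \sum_(x : 'F_p) chi x.
  by rewrite [RHS](reindex_inj (addIr m)).
rewrite !big_split /= sumr_const card_Fp // -!mulr_sumr sum_chi_shift // sum_chi_m sum_chi.
by rewrite -mulr_natl; ring.
Qed.

Lemma legendre_vec_overlap (a b d : C) (m : 'F_p) : m != 0 ->
  \sum_x (legendre_vec a b d x)^* * legendre_vec a b d (x + m) =
  p%:R * (a^* * a) - b^* * b + d^* * (a + b * chi m) + (a + b * chi (- m))^* * d.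
Proof.
move=> m0; pose w (x : 'F_p) := a + b * chi x.
have termE x : (legendre_vec a b d x)^* * legendre_vec a b d (x + m) =
    (w x)^* * w (x + m) + (x == 0)%:R * (d^* * w (x + m)) + (x == - m)%:R * ((w x)^* * d).
  rewrite /legendre_vec -/(w x) -/(w (x + m)) addr_eq0 rmorphD rmorphM rmorph_nat.
  have [-> | x0] /= := eqVneq x 0; last by ring.
  by rewrite eq_sym oppr_eq0 (negPf m0) add0r /=; ring.
under eq_bigr do rewrite termE.
by rewrite !big_split /= !sumr_delta sum_conj_affine_legendre_shift // add0r.
Qed.

Lemma legendre_vec_natr (a b d : C) (k : nat) : (k < p)%N ->
  legendre_vec a b d k%:R = if k == 0%N then a + d else if qres p k then a + b else a - b.
Proof.
move=> kp; rewrite /legendre_vec qres_legendre //.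
have [-> | k0] := eqVneq k 0%N; first by rewrite legendre0 mulr0 addr0 mul1r.
have k0F : (k%:R : 'F_p) != 0 by rewrite Fp_natr_neq0 // lt0n k0.
rewrite (negPf k0F) mul0r addr0.
by case: (legendre_pm1 k0F) => ->; rewrite ?mulr1 ?mulrN1.
Qed.

Lemma legendre_vec_X_overlap (e c t r : C) (j : 'F_p) :
  (p %% 4 = 3)%N -> j != 0 ->
  e \is Num.real -> c \is Num.real -> t \is Num.real ->
  r ^+ 2 = p%:R + 1 -> t ^+ 2 = r + 2 -> c ^+ 2 + e ^+ 2 = 1 ->
  chi 2 * (e - t) = (r + 1) * e ->
  let v := legendre_vec ('i * e) c ('i * (t - e)) in
  \sum_x (v x)^* * v (x + 2 * j) = (r + 1) * v j ^+ 2.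
Proof.
move=> p_mod4 j0 e_real c_real t_real r_sqr t_sqr ce_sqr im_eq v.
have two0 : (2 : 'F_p) != 0 by rewrite Fp_natr_neq0 // odd_prime_gt2.
have chi_2j : chi (2 * j) = chi 2 * chi j.
  by rewrite legendreM // intrM.
have chi_N2j : chi (- (2 * j)) = - (chi 2 * chi j).
  by rewrite -mulN1r legendreM // legendreN1_mod4 // intrM chi_2j rmorphN1 mulN1r.
have chi_j_sqr : chi j ^+ 2 = 1 by rewrite -rmorphXn legendre_sqr.
have chi_2_sqr : chi 2 ^+ 2 = 1 by rewrite -rmorphXn legendre_sqr.
have vj : v j = 'i * e + c * chi j by rewrite /v /legendre_vec (negPf j0) mul0r addr0.
rewrite legendre_vec_overlap ?mulf_neq0 // chi_N2j chi_2j vj.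
rewrite !(rmorphM, rmorphD, rmorphB, rmorphN) /= conjCi !conj_Creal ?realz //.
have p_eq : p%:R = r ^+ 2 - 1 :> C by rewrite r_sqr addrK.
have re_eq : r * (r + 2) * e ^+ 2 + 2 * e * t = r + 2.
  have := congr1 (fun z => z ^+ 2) im_eq; rewrite /= exprMn chi_2_sqr mul1r => sq_eq.
  have -> : r * (r + 2) * e ^+ 2 + 2 * e * t = ((r + 1) * e) ^+ 2 - (e - t) ^+ 2 + t ^+ 2.
    by ring.
  by rewrite -sq_eq subrr add0r t_sqr.
have c_sqr : c ^+ 2 = 1 - e ^+ 2 by rewrite -ce_sqr addrK.
rewrite p_eq.
transitivity ((r + 1) * ('i * e + c * chi j) ^+ 2
    + (r * (r + 2) * e ^+ 2 + 2 * e * t - (r + 2))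
    + 2 * 'i * c * chi j * (chi 2 * (e - t) - (r + 1) * e)).
  by ring: (sqrCi C) chi_j_sqr c_sqr.
by rewrite re_eq im_eq !subrr mulr0 !addr0.
Qed.

End LegendreVector.

Lemma big_ord_Fp (V : nmodType) (p : nat) (F : 'F_p -> V) : prime p ->
  \sum_(k < p) F k%:R = \sum_x F x.
Proof.
move=> p_pr; rewrite [RHS](eq_bigr (fun x : 'F_p => F (val x)%:R)) => [|x _]; last first.
  by rewrite natr_Zp.
by rewrite -!(big_mkord xpredT (fun i => F i%:R)) Fp_cast.
Qed.

Lemma overlap_Fp (C : numClosedFieldType) (p : nat) (v : 'I_p -> C) (f : 'F_p -> C)
    (j : nat) : prime p -> (forall k : 'I_p, v k = f k%:R) ->
  overlap v j = \sum_x (f x)^* * f (x + (2 * j)%:R).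
Proof.
move=> p_pr vf; rewrite /overlap -(big_ord_Fp (fun x => (f x)^* * f (x + (2 * j)%:R)) p_pr).
by apply: eq_bigr => k _; rewrite !vf /= Fp_nat_mod // natrD.
Qed.

Lemma sqrtC_natr_ge2 (C : numClosedFieldType) (n : nat) : (4 <= n)%N -> 2 <= sqrtC (n%:R : C).
Proof.
move=> n_ge4; rewrite -(ler_pXn2r (_ : 0 < 2)%N) ?nnegrE ?sqrtC_ge0 ?ler0n //.
by rewrite sqrtCK -natrX ler_nat.
Qed.

Lemma normC_rect_eq1 (C : numClosedFieldType) (c e : C) :
  c \is Num.real -> e \is Num.real -> c ^+ 2 + e ^+ 2 = 1 -> `|c + 'i * e| = 1.
Proof.
move=> c_real e_real ce_sqr; apply/eqP.
by rewrite -(sqrp_eq1 (normr_ge0 _)) normC2_rect // ce_sqr.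
Qed.

Lemma invC_rect_norm1 (C : numClosedFieldType) (c e : C) :
  c \is Num.real -> e \is Num.real -> c ^+ 2 + e ^+ 2 = 1 -> (c + 'i * e)^-1 = c - 'i * e.
Proof.
move=> c_real e_real ce_sqr; rewrite invC_norm normC_rect_eq1 // expr1n invr1 mul1r.
by rewrite rmorphD rmorphM /= conjCi !conj_Creal // mulNr.
Qed.

Lemma exists_real_sine (C : numClosedFieldType) (r t sigma : C) :
  2 <= r -> t \is Num.real -> t ^+ 2 = r + 2 -> sigma = 1 \/ sigma = -1 ->
  exists2 e, e \is Num.real & e ^+ 2 <= 1 /\ sigma * (e - t) = (r + 1) * e.
Proof.
move=> r_ge2 t_real t_sqr sigma_pm1.
have sigma_sqr : sigma ^+ 2 = 1 by case: sigma_pm1 => ->; rewrite ?sqrrN expr1n.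
have sigma_le1 : sigma <= 1.
  by case: sigma_pm1 => ->; rewrite ?lexx // (le_trans (lerN10 _) ler01).
have r_ge0 : 0 <= r := le_trans (ler0n _ 2) r_ge2.
pose q := r + 1 - sigma.
have r_le_q : r <= q by rewrite /q -addrA lerDl subr_ge0.
have q_gt0 : 0 < q by apply: lt_le_trans r_le_q; apply: lt_le_trans r_ge2.
have sigma_real : sigma \is Num.real by case: sigma_pm1 => ->; rewrite ?realN real1.
exists (- (sigma * t) / q).
  by apply: rpredM; [rewrite rpredN rpredM | rewrite rpredV gtr0_real].
split; last by rewrite /q; field: sigma_sqr; rewrite -/q gt_eqF.
rewrite expr_div_n sqrrN exprMn sigma_sqr mul1r t_sqr ler_pdivrMr ?exprn_gt0 // mul1r.
apply: le_trans (_ : r ^+ 2 <= q ^+ 2); last by rewrite ler_pXn2r // nnegrE ?ltW.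
rewrite -subr_ge0 (_ : r ^+ 2 - (r + 2) = (r - 2) * (r + 1)); last by ring.
by rewrite mulr_ge0 ?subr_ge0 ?addr_ge0.
Qed.

Local Open Scope complex_scope.

Theorem proposition2 (R : realType) (p : nat) (hp : prime p) (hp4 : (p %% 4 = 3)%N)
  (s : R[i]) (hs2 : s ^+ 2 = - 2 - sqrtC (p.+1)%:R) (hsre : 'Re s = 0) :
  exists x1 : R[i], `|x1| = 1 /\
    let v : 'I_p -> R[i] := fun k =>
      if (k == 0 :> nat) then s else if qres p k then x1 else - x1^-1 in
    forall j : 'I_p, (j != 0 :> nat) ->
      overlap v j = (sqrtC (p.+1)%:R + 1) * (v j) ^+ 2.
Proof.
Local Close Scope complex_scope.
have p_odd : odd p by rewrite (divn_eq p 4) hp4 oddD oddM andbF.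
set r := sqrtC _ in hs2 *.
have r_sqr : r ^+ 2 = p%:R + 1 by rewrite sqrtCK natr1.
have r_ge2 : 2 <= r by apply: sqrtC_natr_ge2; have := odd_prime_gt2 p_odd hp; lia.
set t := 'Im s.
have s_it : s = 'i * t by rewrite [LHS]Crect hsre add0r.
have t_sqr : t ^+ 2 = r + 2.
  by apply: oppr_inj; rewrite -mulN1r -(sqrCi (R[i])) -exprMn -s_it hs2; ring.
have two0 : (2 : 'F_p) != 0 by rewrite Fp_natr_neq0 // odd_prime_gt2.
pose chi2 : R[i] := (legendre (2 : 'F_p))%:~R.
have chi2_pm1 : chi2 = 1 \/ chi2 = -1.
  by rewrite /chi2; case: (legendre_pm1 two0) => ->; [left | right].
have [e e_real [e_le1 e_im]] := exists_real_sine r_ge2 (Creal_Im s) t_sqr chi2_pm1.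
pose c := sqrtC (1 - e ^+ 2).
have c_real : c \is Num.real by rewrite sqrtC_real // subr_ge0.
have ce_sqr : c ^+ 2 + e ^+ 2 = 1 by rewrite sqrtCK subrK.
exists (c + 'i * e); split => [|v j j0]; first exact: normC_rect_eq1.
have vE (k : 'I_p) : v k = legendre_vec ('i * e) c ('i * (t - e)) (k%:R : 'F_p).
  rewrite legendre_vec_natr // /v.
  case: (_ == _); first by rewrite s_it; ring.
  case: (qres _ _); first by rewrite addrC.
  (* The inverse in the statement is that of [complex R], only convertible to
     the one of the closed field, so we cannot rewrite with it. *)
  by apply: eq_trans (congr1 -%R (invC_rect_norm1 c_real e_real ce_sqr)) _; ring.
rewrite (overlap_Fp _ hp vE) vE natrM.
by apply: legendre_vec_X_overlap; rewrite // ?Creal_Im // Fp_natr_neq0 // lt0n j0 ltn_ord.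
Qed.
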